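(* Let $S$ be a subcartesian space and let $S_{reg}$ be the set of all structurally regular points of $S$. Then $S_{reg}$ is open and dense in $S$.
   Context: A differential space (in the sense of Sikorski) is a set $S$ together with a family $C^\infty(S)$ of real-valued functions on $S$, with $S$ carrying the weakest topology making all $f\in C^\infty(S)$ continuous, such that $C^\infty(S)$ is closed under composition with smooth functions $F\in C^\infty(\mathbb{R}^k)$ (i.e. $F(f_1,\dots,f_k)\in C^\infty(S)$ for $f_i\in C^\infty(S)$), and such that any function on $S$ which near every point agrees with some element of $C^\infty(S)$ belongs to $C^\infty(S)$. A smooth map between differential spaces is one whose pull-back preserves smooth functions; a diffeomorphism is a smooth bijection with smooth inverse. Every subset $V$ of a differential space inherits a differential-space structure (a differential subspace); for $V\subseteq\mathbb{R}^n$, a function $f:V\to\mathbb{R}$ is smooth iff for each $x\in V$ there is a neighbourhood $U$ of $x$ in $\mathbb{R}^n$ and $f_x\in C^\infty(\mathbb{R}^n)$ with $f|_{U\cap V}=f_x|_{U\cap V}$. A subcartesian space is a Hausdorff differential space $S$ such that every point has an open neighbourhood diffeomorphic to a differential subspace (not necessarily open) of some $\mathbb{R}^n$. The structural dimension $n_x$ of $S$ at $x\in S$ is the smallest integer $n$ such that some open neighbourhood of $x$ in $S$ is diffeomorphic to a subset of $\mathbb{R}^n$. A point $x\in S$ is structurally regular if there is a neighbourhood $U$ of $x$ in $S$ with $n_y=n_x$ for all $y\in U$. *)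

From HB Require Import structures.
From mathcomp Require Import all_boot all_order all_algebra.
From mathcomp Require Import all_classical all_reals all_analysis.
Set Implicit Arguments. Unset Strict Implicit. Unset Printing Implicit Defensive.
Import Order.TTheory GRing.Theory Num.Theory.
Import numFieldNormedType.Exports.
Local Open Scope classical_set_scope.
Local Open Scope ring_scope.

Section Subcartesian.
Variable R : realType.

Fixpoint Ck (n k : nat) (F : 'rV[R]_n -> R) : Prop :=
  match k with
  | 0 => continuous F
  | k'.+1 => (forall (x v : 'rV[R]_n), derivable F x v) /\
             (forall v : 'rV[R]_n, Ck k' ('D_v F))
  end.

Definition smooth_Rn (n : nat) (F : 'rV[R]_n -> R) : Prop := forall k, Ck k F.

(* The weakest topology on S making all f in C continuous: a set A is open iff
   around each of its points it contains a basic set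
   { y | |f_i y - f_i x| < eps for i < k } with f_i in C. *)
Definition dopen (S : Type) (C : set (S -> R)) (A : set S) : Prop :=
  forall x, A x -> exists (k : nat) (fs : 'I_k -> S -> R) (eps : R),
    (forall i, C (fs i)) /\ 0 < eps /\
    (forall y, (forall i, `|fs i y - fs i x| < eps) -> A y).

Definition differential_space (S : Type) (C : set (S -> R)) : Prop :=
  (forall (k : nat) (F : 'rV[R]_k -> R) (fs : 'I_k -> S -> R),
      smooth_Rn F -> (forall i, C (fs i)) ->
      C (fun x => F (\row_i fs i x))) /\
  (forall g : S -> R,
      (forall x, exists U, dopen C U /\ U x /\
         exists f, C f /\ forall y, U y -> g y = f y) -> C g).

(* Smooth functions on the differential subspace W of S (values off W irrelevant). *)
Definition sub_smooth (S : Type) (C : set (S -> R)) (W : set S) (f : S -> R) : Prop :=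
  forall x, W x -> exists U, dopen C U /\ U x /\
    exists g, C g /\ forall y, U y -> W y -> f y = g y.

Definition Rn_sub_smooth (n : nat) (V : set 'rV[R]_n) (f : 'rV[R]_n -> R) : Prop :=
  forall x, V x -> exists U : set 'rV[R]_n, open U /\ U x /\
    exists g, smooth_Rn g /\ forall y, U y -> V y -> f y = g y.

Definition diffeomorphic (S : Type) (C : set (S -> R)) (W : set S)
    (n : nat) (V : set 'rV[R]_n) : Prop :=
  exists (phi : S -> 'rV[R]_n) (psi : 'rV[R]_n -> S),
    (forall x, W x -> V (phi x)) /\ (forall y, V y -> W (psi y)) /\
    (forall x, W x -> psi (phi x) = x) /\ (forall y, V y -> phi (psi y) = y) /\
    (forall h, Rn_sub_smooth V h -> sub_smooth C W (h \o phi)) /\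
    (forall f, sub_smooth C W f -> Rn_sub_smooth V (f \o psi)).

Definition dhausdorff (S : Type) (C : set (S -> R)) : Prop :=
  forall x y : S, x <> y -> exists U V, dopen C U /\ dopen C V /\ U x /\ V y /\
    (forall z, U z -> V z -> False).

Definition embeds_at (S : Type) (C : set (S -> R)) (x : S) (n : nat) : Prop :=
  exists W, dopen C W /\ W x /\ exists V : set 'rV[R]_n, diffeomorphic C W V.

Definition subcartesian (S : Type) (C : set (S -> R)) : Prop :=
  differential_space C /\ dhausdorff C /\ forall x, exists n, embeds_at C x n.

Definition struct_dim (S : Type) (C : set (S -> R)) (x : S) (n : nat) : Prop :=
  embeds_at C x n /\ forall m, embeds_at C x m -> (n <= m)%N.

Definition struct_regular (S : Type) (C : set (S -> R)) (x : S) : Prop :=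
  exists n, struct_dim C x n /\
    exists U, dopen C U /\ U x /\ forall y, U y -> struct_dim C y n.

End Subcartesian.

From mathcomp Require Import all_boot all_order all_algebra.
From mathcomp Require Import all_classical all_reals all_analysis.
Import Order.TTheory GRing.Theory Num.Theory.
Local Open Scope classical_set_scope.
Local Open Scope ring_scope.

(* Openness: a regular point comes with an open set of points of the same
   dimension, and that set witnesses the regularity of each of its points.
   Density: in a nonempty open set A pick a point y where the embedding
   dimension is minimal over A; on A intersected with an embedding
   neighbourhood of y every point embeds in that dimension and, by
   minimality, in no smaller one, so y is regular. *)

Section StructuralRegularity.
Context {R : realType} {S : Type} {C : set (S -> R)}.

Lemma dopenI {A B : set S} : dopen C A -> dopen C B -> dopen C (A `&` B).
Proof.
move=> oA oB x [Ax Bx].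
have [k1 [f1 [e1 [Cf1 [e1_gt0 sub1]]]]] := oA x Ax.
have [k2 [f2 [e2 [Cf2 [e2_gt0 sub2]]]]] := oB x Bx.
exists (k1 + k2)%N,
  (fun i => match fintype.split i with inl j => f1 j | inr j => f2 j end),
  (Num.min e1 e2).
split; [by move=> i; case: fintype.split | split; first by rewrite lt_min e1_gt0].
move=> y near_y; split.
- apply: sub1 => j; have := near_y (lshift k2 j).
  by rewrite -[lshift k2 j]/(unsplit (inl j)) unsplitK lt_min => /andP[].
- apply: sub2 => j; have := near_y (rshift k1 j).
  by rewrite -[rshift k1 j]/(unsplit (inr j)) unsplitK lt_min => /andP[].
Qed.

Lemma struct_regular_on {U : set S} {n : nat} :
  dopen C U -> (forall y, U y -> struct_dim C y n) ->
  forall y, U y -> struct_regular C y.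
Proof. by move=> oU dimU y Uy; exists n; split; [exact: dimU | exists U]. Qed.

Lemma dopen_struct_regular : dopen C (struct_regular C).
Proof.
move=> x [n [_ [U [oU [Ux dimU]]]]].
have [k [fs [e [Cfs [e_gt0 subU]]]]] := oU x Ux.
exists k, fs, e; do 2!split => //.
by move=> y /subU; apply: (struct_regular_on oU dimU).
Qed.

Lemma struct_regular_min_embedding {A : set S} {y : S} {m : nat} :
  dopen C A -> A y -> embeds_at C y m ->
  (forall z n, A z -> embeds_at C z n -> (m <= n)%N) ->
  struct_regular C y.
Proof.
move=> oA Ay [W [oW [Wy embW]]] minm.
have dimAW z : (A `&` W) z -> struct_dim C z m.
  by move=> [Az Wz]; split; [exists W | move=> n; apply: minm].
exact: struct_regular_on (dopenI oA oW) dimAW y (conj Ay Wy).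
Qed.

Lemma exists_min_embedding_dim {A : set S} {x : S} :
  (forall x, exists n, embeds_at C x n) -> A x ->
  exists y m, [/\ A y, embeds_at C y m &
    forall z n, A z -> embeds_at C z n -> (m <= n)%N].
Proof.
move=> emb Ax; have [n0 embx] := emb x.
have exA : exists n, `[< exists z, A z /\ embeds_at C z n >].
  by exists n0; apply/asboolP; exists x.
case: (ex_minnP exA) => m /asboolP [y [Ay emby]] minm.
exists y, m; split => // z n Az embz.
by apply: minm; apply/asboolP; exists z.
Qed.

End StructuralRegularity.

Theorem mainTheorem1 (R : realType) (S : Type) (C : set (S -> R)) :
  subcartesian C ->
  dopen C (struct_regular C) /\
  (forall A : set S, dopen C A -> (exists x, A x) ->
     exists x, A x /\ struct_regular C x).
Proof.
move=> [_ [_ emb]]; split; first exact: dopen_struct_regular.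
move=> A oA [x Ax].
have [y [m [Ay emby minm]]] := exists_min_embedding_dim emb Ax.
by exists y; split; last exact: struct_regular_min_embedding oA Ay emby minm.
Qed.
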